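(* Let $m\geq 1$ and let $f=a_0+a_1z+\cdots+a_mz^m\in\mathbb{Z}[z]$ be a primitive polynomial such that $a_m=\pm p^kd$ for some positive integers $k,d$ and a prime $p$ with $p\nmid d$, and such that every complex zero of $f$ lies outside the closed disk $\{z\in\mathbb{C}:|z|\leq d\}$. Suppose there is an index $j$ with $1\leq j\leq m$ such that $p\nmid a_{m-j}$, and suppose $|a_0/q|\leq|a_m|$, where $q$ is the smallest prime divisor of $a_0$. Then $f$ is a product of at most $\min\{k,j\}$ irreducible polynomials in $\mathbb{Z}[z]$. In particular, if $k=1$ or $j=1$, then $f$ is irreducible in $\mathbb{Z}[z]$.
   Context: A polynomial in $\mathbb{Z}[z]$ is primitive if the greatest common divisor of its coefficients is $1$. ''$f$ is a product of at most $r$ irreducible polynomials'' means that in a factorization of $f$ into irreducible elements of $\mathbb{Z}[z]$, the number of factors (counted with multiplicity) is at most $r$. *)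

From HB Require Import structures.
From mathcomp Require Import all_boot all_order all_algebra algC.
Set Implicit Arguments. Unset Strict Implicit. Unset Printing Implicit Defensive.
Import Order.TTheory GRing.Theory Num.Theory.
Local Open Scope ring_scope.

Definition primitive_int (f : {poly int}) : bool :=
  (\big[gcdn/0%N]_(i < size f) absz (f`_i)%R == 1)%N.

Definition irreducible_Zz (g : {poly int}) : Prop :=
  g \isn't a GRing.unit /\
  forall a b : {poly int}, g = a * b -> a \is a GRing.unit \/ b \is a GRing.unit.

Definition prod_at_most_irr (r : nat) (f : {poly int}) : Prop :=
  exists s : seq {poly int},
    [/\ (size s <= r)%N, (forall g, g \in s -> irreducible_Zz g) & f = \prod_(g <- s) g].

From HB Require Import structures.
From Stdlib Require Import Classical.
From mathcomp Require Import zify.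
From mathcomp Require Import all_boot all_order all_algebra algC.
Set Implicit Arguments.
Unset Strict Implicit.
Unset Printing Implicit Defensive.

Import Order.TTheory GRing.Theory Num.Theory.
Local Open Scope ring_scope.

(* Write f = g_1 ... g_s as a product of irreducibles; primitivity makes every
   g_i nonconstant.  Since the roots of f lie outside the disk of radius d,
   every nonconstant factor g of f satisfies |g(0)| > d |lc g|.  This forces
   p | lc g: otherwise lc g divides d, and for f = g h with h nonconstant,
   |h(0)| <= |a_0| / q <= |a_m| = |lc g| |lc h| <= d |lc h| < |h(0)|.  Hence
   p^s divides a_m = +-p^k d, so s <= k; and each factor loses at least one
   degree modulo p, while f mod p keeps degree >= m - j, so s <= j. *)

Lemma unitzE (c : int) : (c \is a GRing.unit) = (absz c == 1%N).
Proof. by case: c => [[|[|n]]|[|n]]. Qed.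

Lemma normr_intr (R : numDomainType) (x : int) : `|(x%:~R : R)| = (absz x)%:R.
Proof. by rewrite -intr_norm -abszE. Qed.

Lemma leq_div_pdiv_mul (a b : nat) :
  (1 < a)%N -> (0 < b)%N -> (b <= (a * b) %/ pdiv (a * b))%N.
Proof.
move=> a_gt1 b_gt0.
have pdiv_le_a : (pdiv (a * b) <= a)%N by apply: pdiv_min_dvd; rewrite ?dvdn_mulr.
rewrite -{1}(mulKn b (ltnW a_gt1)).
by apply: leq_div2l pdiv_le_a; rewrite pdiv_gt0.
Qed.

Lemma prodr_gt_lb (R : numDomainType) (I : eqType) (r : seq I) (F : I -> R) (c : R) :
  1 <= c -> r != [::] -> (forall i, i \in r -> c < F i) -> c < \prod_(i <- r) F i.
Proof.
move=> c_ge1; case: r => [|i r] // _ F_gt; rewrite big_cons.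
have Fi_gt : c < F i by rewrite F_gt ?mem_head.
have prod_ge1 : 1 <= \prod_(j <- r) F j.
  rewrite big_seq; apply: (big_ind (fun x => 1 <= x)) => // [x y|j j_r].
    exact: mulr_ege1.
  by rewrite ltW // (le_lt_trans c_ge1) // F_gt // inE j_r orbT.
rewrite (lt_le_trans Fi_gt) // -{1}(mulr1 (F i)) ler_pM2l //.
by rewrite (le_lt_trans _ Fi_gt) // (le_trans ler01 c_ge1).
Qed.

Lemma coef0_gt_lead_coef (C : numClosedFieldType) (q : {poly C}) (c : C) :
  1 <= c -> (1 < size q)%N -> (forall z, root q z -> c < `|z|) ->
  c * `|lead_coef q| < `|q`_0|.
Proof.
move=> c_ge1 q_nonconst roots_gt; have [r q_eq] := closed_field_poly_normal q.
have lq_neq0 : lead_coef q != 0 by rewrite lead_coef_eq0 -size_poly_gt0 ltnW.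
have r_neq_nil : r != [::].
  apply: contraTneq q_nonconst => r_nil.
  by rewrite q_eq r_nil big_nil -mul_polyC mulr1 size_polyC lq_neq0.
have -> : `|q`_0| = `|lead_coef q| * \prod_(z <- r) `|z|.
  rewrite -horner_coef0 {1}q_eq hornerZ horner_prod normrM normr_prod.
  by congr (_ * _); apply: eq_bigr => z _; rewrite hornerXsubC sub0r normrN.
rewrite mulrC ltr_pM2l ?normr_gt0 //; apply: prodr_gt_lb => // z z_r.
by apply: roots_gt; rewrite q_eq rootZ // root_prod_XsubC.
Qed.

Lemma factor_coef0_gt_lead_coef (C : numClosedFieldType) (f g h : {poly int}) (d : nat) :
  (0 < d)%N -> (forall z : C, root (map_poly intr f) z -> d%:R < `|z|) ->
  f = g * h -> (1 < size g)%N -> (d * absz (lead_coef g) < absz (g`_0)%R)%N.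
Proof.
move=> d_gt0 roots_f fgh g_nonconst.
have := @coef0_gt_lead_coef C (map_poly intr g) d%:R.
rewrite size_map_inj_poly ?lead_coef_map_inj ?coef_map //=; try exact: intr_inj.
rewrite !normr_intr -natrM ltr_nat; apply; rewrite ?ler1n //.
by move=> z g_z; apply: roots_f; rewrite fgh rmorphM rootM g_z.
Qed.

Section PrimitiveFactors.

Variable f : {poly int}.
Hypothesis f_primitive : primitive_int f.

Lemma primitive_constant_factor_unit (a h : {poly int}) :
  f = a * h -> (size a <= 1)%N -> a \is a GRing.unit.
Proof.
move=> fah /size1_polyC a_eq; set c := a`_0 in a_eq.
have c_dvd_coef i : (absz c %| absz (f`_i)%R)%N.
  by rewrite fah a_eq coefCM abszM dvdn_mulr.
have c_dvd_1 : (absz c %| 1)%N.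
  by move: f_primitive => /eqP <-; apply/dvdn_biggcdP => i _.
have c_eq1 : absz c = 1%N by apply/eqP; rewrite -dvdn1.
have c_neq0 : c != 0 by apply: contra_eq_neq c_eq1 => ->.
by rewrite poly_unitE a_eq size_polyC c_neq0 coefC /= unitzE c_eq1.
Qed.

Lemma primitive_nonunit_factor_size (a h : {poly int}) :
  f = a * h -> a \isn't a GRing.unit -> (1 < size a)%N.
Proof.
move=> fah; apply: contraNT; rewrite -leqNgt.
exact: primitive_constant_factor_unit fah.
Qed.

Lemma primitive_factor_irreducibles (g h : {poly int}) :
  f = g * h -> g \isn't a GRing.unit ->
  exists2 s : seq {poly int},
    (forall e, e \in s -> irreducible_Zz e) & g = \prod_(e <- s) e.
Proof.
have [n] := ubnP (size g); elim: n => // n IHn in g h *; rewrite ltnS => g_size fgh g_nu.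
have [g_irr | g_red] := classic (irreducible_Zz g).
  by exists [:: g]; [move=> e /[1!inE] /eqP -> | rewrite big_seq1].
have [a [b [gab a_nu b_nu]]] : exists a b, [/\ g = a * b,
    a \isn't a GRing.unit & b \isn't a GRing.unit].
  apply: NNPP => no_split; apply: g_red; split => // a b gab.
  apply/orP/negPn/negP => /norP [a_nu b_nu]; by apply: no_split; exists a, b.
have fa : f = a * (b * h) by rewrite fgh gab mulrA.
have fb : f = b * (a * h) by rewrite fgh gab mulrCA mulrA.
have a_size := primitive_nonunit_factor_size fa a_nu.
have b_size := primitive_nonunit_factor_size fb b_nu.
have a_neq0 : a != 0 by rewrite -size_poly_gt0 ltnW.
have b_neq0 : b != 0 by rewrite -size_poly_gt0 ltnW.
have g_size_eq : size g = (size a + size b).-1 by rewrite gab size_mul.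
have [a_lt b_lt] : (size a < n)%N /\ (size b < n)%N by lia.
rewrite gab; have [sa sa_irr ->] := IHn a (b * h) a_lt fa a_nu.
have [sb sb_irr ->] := IHn b (a * h) b_lt fb b_nu.
exists (sa ++ sb); last by rewrite big_cat.
by move=> e; rewrite mem_cat => /orP [/sa_irr | /sb_irr].
Qed.

End PrimitiveFactors.

Lemma expn_size_dvd_lead_coef_prod (p : nat) (s : seq {poly int}) :
  (forall e, e \in s -> p %| absz (lead_coef e))%N ->
  (p ^ size s %| absz (lead_coef (\prod_(e <- s) e)%R))%N.
Proof.
elim: s => [|e s IHs] p_dvd; first by rewrite big_nil lead_coef1.
rewrite big_cons lead_coefM abszM expnS dvdn_mul ?p_dvd ?mem_head //.
by apply: IHs => x x_s; rewrite p_dvd // inE x_s orbT.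
Qed.

Lemma size_factors_leq_expn (p k d : nat) (s : seq {poly int}) :
  prime p -> ~~ (p %| d)%N -> absz (lead_coef (\prod_(e <- s) e)%R) = (p ^ k * d)%N ->
  (forall e, e \in s -> p %| absz (lead_coef e))%N -> (size s <= k)%N.
Proof.
move=> p_prime p_ndvd_d lc_prod /expn_size_dvd_lead_coef_prod.
rewrite lc_prod mulnC Gauss_dvdr ?coprimeXl ?prime_coprime //.
by rewrite dvdn_Pexp2l ?prime_gt1.
Qed.

Section ReductionModPrime.

Variable p : nat.
Hypothesis p_prime : prime p.

Lemma intr_Fp_eq0 (x : int) : ((x%:~R : 'F_p) == 0) = (p %| absz x)%N.
Proof.
rewrite {1}(intEsign x) intrM mulf_eq0 rmorphXn rmorphN1 signr_eq0 /=.
by rewrite (dvdn_pcharf (pchar_Fp p_prime)).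
Qed.

Lemma size_map_Fp_lt (e : {poly int}) :
  e != 0 -> (p %| absz (lead_coef e))%N ->
  (size (map_poly intr e : {poly 'F_p}) < size e)%N.
Proof.
move=> e_neq0 p_dvd; rewrite ltn_neqAle size_poly andbT.
apply: contraTneq p_dvd => size_eq; rewrite -intr_Fp_eq0.
have : lead_coef (map_poly intr e : {poly 'F_p}) != 0.
  by rewrite lead_coef_eq0 -size_poly_gt0 size_eq size_poly_gt0.
by rewrite lead_coefE size_eq coef_map.
Qed.

Lemma size_map_Fp_prod (s : seq {poly int}) :
  (forall e, e \in s -> (1 < size e)%N /\ (p %| absz (lead_coef e))%N) ->
  (size (map_poly intr (\prod_(e <- s) e)%R : {poly 'F_p}) + size s
     <= size (\prod_(e <- s) e)%R)%N.
Proof.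
elim: s => [|e s IHs] s_ok; first by rewrite big_nil rmorph1 !size_poly1.
have [e_size p_dvd] := s_ok e (mem_head e s).
have tail_ok x : x \in s -> (1 < size x)%N /\ (p %| absz (lead_coef x))%N.
  by move=> x_s; apply: s_ok; rewrite inE x_s orbT.
have {}IHs := IHs tail_ok.
have e_neq0 : e != 0 by rewrite -size_poly_gt0 ltnW.
set P := \prod_(x <- s) x in IHs *.
have P_neq0 : P != 0.
  rewrite prodf_seq_neq0; apply/allP => x /tail_ok [x_size _].
  by rewrite -size_poly_gt0 ltnW.
have e_mod_lt := size_map_Fp_lt e_neq0 p_dvd.
have eP_mod_le : (size (map_poly intr (e * P) : {poly 'F_p}) <=
    (size (map_poly intr e : {poly 'F_p}) + size (map_poly intr P : {poly 'F_p})).-1)%N.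
  by rewrite rmorphM; apply: size_polyMleq.
rewrite big_cons -/P (size_mul e_neq0 P_neq0) /=.
move: P_neq0 eP_mod_le e_mod_lt IHs e_size; rewrite -size_poly_gt0.
(* The sizes are generalized because lia does not identify occurrences that
   differ only in their canonical-structure paths. *)
move: (size (map_poly _ (e * P))) (size (map_poly _ e)) (size (map_poly _ P)).
move: (size e) (size P) (size s); lia.
Qed.

Lemma coef_index_add_size_factors_lt (s : seq {poly int}) (i : nat) :
  (forall e, e \in s -> (1 < size e)%N /\ (p %| absz (lead_coef e))%N) ->
  ~~ (p %| absz ((\prod_(e <- s) e)`_i)%R)%N ->
  (i + size s < size (\prod_(e <- s) e)%R)%N.
Proof.
move=> /size_map_Fp_prod size_le p_ndvd_coef.
rewrite (leq_trans _ size_le) // ltn_add2r.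
rewrite ltnNge; apply: contra p_ndvd_coef => /(nth_default 0).
by rewrite coef_map /= => /eqP; rewrite intr_Fp_eq0.
Qed.

End ReductionModPrime.

Section NonconstantFactors.

Variables (C : numClosedFieldType) (f : {poly int}) (k d p : nat).
Hypotheses (f_primitive : primitive_int f) (k_gt0 : (0 < k)%N) (d_gt0 : (0 < d)%N).
Hypothesis p_prime : prime p.
Hypothesis lead_coef_f : absz (lead_coef f) = (p ^ k * d)%N.
Hypothesis roots_f : forall z : C, root (map_poly intr f) z -> d%:R < `|z|.
Hypothesis coef0_f : (absz (f`_0)%R %/ pdiv (absz (f`_0)%R) <= absz (lead_coef f))%N.

Lemma p_dvd_lead_coef_factor (g h : {poly int}) :
  f = g * h -> (1 < size g)%N -> (p %| absz (lead_coef g))%N.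
Proof.
move=> fgh g_nonconst; apply/idPn => p_ndvd_g.
have lc_f_neq0 : lead_coef f != 0.
  by rewrite -absz_gt0 lead_coef_f muln_gt0 expn_gt0 prime_gt0.
have [g_neq0 h_neq0] : g != 0 /\ h != 0.
  by apply/andP; rewrite -negb_or -mulf_eq0 -fgh -lead_coef_eq0.
set A := absz (lead_coef g); set B := absz (lead_coef h).
have AB : (A * B = p ^ k * d)%N by rewrite -abszM -lead_coefM -fgh.
have A_le_d : (A <= d)%N.
  have A_coprime : coprime A (p ^ k) by rewrite coprime_sym coprimeXl ?prime_coprime.
  by apply: dvdn_leq => //; rewrite -(Gauss_dvdr _ A_coprime) -AB dvdn_mulr.
have fhg : f = h * g by rewrite fgh mulrC.
have [h_const | h_nonconst] := leqP (size h) 1.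
  have B_eq1 : B = 1%N.
    apply/eqP; rewrite -unitzE /B lead_coefE.
    have := primitive_constant_factor_unit f_primitive fhg h_const.
    by rewrite poly_unitE => /andP [/eqP -> ].
  by move: p_ndvd_g; rewrite -/A -(muln1 A) -B_eq1 AB dvdn_mulr ?dvdn_exp.
have g0_gt := factor_coef0_gt_lead_coef d_gt0 roots_f fgh g_nonconst.
have h0_gt := factor_coef0_gt_lead_coef d_gt0 roots_f fhg h_nonconst.
have A_gt0 : (0 < A)%N by rewrite absz_gt0 lead_coef_eq0.
have h0_le : (absz (h`_0)%R <= A * B)%N.
  rewrite AB -lead_coef_f (leq_trans _ coef0_f) // fgh coef0M abszM.
  apply: leq_div_pdiv_mul; last exact: leq_ltn_trans h0_gt.
  by apply: leq_ltn_trans g0_gt; rewrite muln_gt0 d_gt0.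
by move: h0_gt; rewrite -/B ltnNge (leq_trans h0_le) // leq_mul2r A_le_d orbT.
Qed.

End NonconstantFactors.

Lemma irreducible_Zz_prod_size_le1 (s : seq {poly int}) :
  (forall e, e \in s -> irreducible_Zz e) -> (size s <= 1)%N ->
  \prod_(e <- s) e \isn't a GRing.unit -> irreducible_Zz (\prod_(e <- s) e).
Proof.
case: s => [|e [|//]] s_irr _; first by rewrite big_nil unitr1.
by rewrite big_seq1 => _; apply: s_irr; rewrite mem_head.
Qed.

Theorem theorem3 (f : {poly int}) (m k d p j : nat) :
  (1 <= m)%N -> size f = m.+1 ->
  primitive_int f ->
  (0 < k)%N -> (0 < d)%N -> prime p -> ~~ (p %| d)%N ->
  (lead_coef f = (p ^ k * d)%N%:Z \/ lead_coef f = - (p ^ k * d)%N%:Z) ->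
  (forall z : algC, root (map_poly intr f) z -> d%:R < `|z|) ->
  (1 <= j <= m)%N -> ~~ (p %| (absz (f`_(m - j))%R))%N ->
  ((absz (f`_0)%R) %/ pdiv (absz (f`_0)%R) <= (absz (lead_coef f)))%N ->
  prod_at_most_irr (minn k j) f /\
  ((k = 1%N \/ j = 1%N) -> irreducible_Zz f).
Proof.
move=> m_gt0 f_size f_prim k_gt0 d_gt0 p_prime p_ndvd_d lc_f roots_f
  /andP [_ j_le_m] p_ndvd_coef coef0_f.
have lc_f_abs : absz (lead_coef f) = (p ^ k * d)%N by case: lc_f => ->; rewrite ?abszN.
have f_nu : f \isn't a GRing.unit by rewrite poly_unitE f_size eqSS eqn0Ngt m_gt0.
have [s s_irr f_eq] := primitive_factor_irreducibles f_prim (esym (mulr1 f)) f_nu.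
have s_factor e : e \in s -> f = e * \prod_(x <- rem e s) x.
  by move=> e_s; rewrite {1}f_eq (big_rem _ e_s).
have s_nonconst e : e \in s -> (1 < size e)%N.
  move=> e_s; have [e_nu _] := s_irr e e_s.
  by apply: (primitive_nonunit_factor_size f_prim (s_factor e e_s)).
have s_p_dvd e : e \in s -> (p %| absz (lead_coef e))%N.
  move=> e_s; apply: (p_dvd_lead_coef_factor f_prim k_gt0 d_gt0 p_prime
    lc_f_abs roots_f coef0_f (s_factor e e_s) (s_nonconst e e_s)).
have s_le_k : (size s <= k)%N.
  by apply: size_factors_leq_expn p_prime p_ndvd_d _ s_p_dvd; rewrite -f_eq.
have s_le_j : (size s <= j)%N.
  have := coef_index_add_size_factors_lt p_prime
    (fun e e_s => conj (s_nonconst e e_s) (s_p_dvd e e_s)).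
  (* Clearing the context keeps the lia certificate small enough for Qed. *)
  by rewrite -f_eq f_size => /(_ _ p_ndvd_coef); clear -j_le_m; lia.
split; first by exists s; rewrite leq_min s_le_k s_le_j.
move=> k1_or_j1; rewrite f_eq; apply: irreducible_Zz_prod_size_le1 => //.
  by case: k1_or_j1 => <-.
by rewrite -f_eq.
Qed.
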